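(* Let $(\mathcal E,B,\mathcal L_{\mathcal P})$ be an epistemic space with $|\mathcal P|\ge2$. Any ES basic fusion operator that satisfies (ESF-SD), (ESF-U) and (ESF-I) also satisfies (ESF-D).
   Context: $[\![\phi]\!]$ denotes models; $\varphi_M$ a formula with models exactly $M$. Epistemic space: $\mathcal E$ nonempty, $B:\mathcal E\to\mathcal L_{\mathcal P}$ (propositional formulas over finite $\mathcal P$) with image modulo equivalence exactly the consistent formulas. Agents: well-ordered set $\mathcal S$; society: nonempty finite $N\subseteq\mathcal S$; $N$-profile $\Phi:N\to\mathcal E$, $E_i=\Phi(i)$, identified with $E_i$ if $N=\{i\}$; profiles on $\{i_1<\dots<i_n\}$, $\{j_1<\dots<j_m\}$ equivalent if $n=m$ and entries coincide position-wise. ES basic fusion operator: a map $\nabla(\Phi,E)\in\mathcal E$ with (ESF1) $B(\nabla(\Phi,E))\vdash B(E)$; (ESF2) equivalent profiles and $B(E)\equiv B(E')$ give equivalent $B(\nabla)$; (ESF3) if $B(E)\equiv B(E')\wedge B(E'')$ then $B(\nabla(\Phi,E'))\wedge B(E'')\vdash B(\nabla(\Phi,E))$; (ESF4) if moreover $B(\nabla(\Phi,E'))\wedge B(E'')\nvdash\bot$ then $B(\nabla(\Phi,E))\vdash B(\nabla(\Phi,E'))\wedge B(E'')$. (ESF-SD): for every agent $i$, interpretations $w,w',w''$ and $E_{w,w'},E_{w',w''}$ with $[\![B(E_{w,w'})]\!]=\{w,w'\}$, $[\![B(E_{w',w''})]\!]=\{w',w''\}$, there exist $i$-profiles realising each of: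 (i) $B(\nabla(E_i,E_{w,w'}))\equiv\varphi_{w,w'}$ and $B(\nabla(E_i,E_{w',w''}))\equiv\varphi_{w',w''}$; (ii) $\equiv\varphi_{w,w'}$ and $\equiv\varphi_{w'}$; (iii) $\equiv\varphi_w$ and $\equiv\varphi_{w',w''}$; (iv) $\equiv\varphi_w$ and $\equiv\varphi_{w'}$. (ESF-U): for every $N$, $N$-profile $\Phi$, $E$: if $E_i=E_j$ for all $i,j\in N$ then $B(\nabla(\Phi,E))\equiv B(\nabla(E_i,E))$ for all $i\in N$. (ESF-I): for every $N$, $N$-profiles $\Phi,\Phi'$, $E$: if for every $E'$ with $B(E')\vdash B(E)$, $B(\nabla(E_j,E'))\equiv B(\nabla(E'_j,E'))$ for all $j\in N$, then $B(\nabla(\Phi,E))\equiv B(\nabla(\Phi',E))$. (ESF-D): for every society $N$ there exists $d_N\in N$ such that for every $N$-profile $\Phi$ and every $E$, $B(\nabla(\Phi,E))\vdash B(\nabla(E_{d_N},E))$. *)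

From HB Require Import structures.
From mathcomp Require Import all_boot all_order.
Set Implicit Arguments. Unset Strict Implicit. Unset Printing Implicit Defensive.

Inductive form (P : Type) : Type :=
  | FVar of P
  | FTop
  | FBot
  | FNeg of form P
  | FAnd of form P & form P
  | FOr of form P & form P
  | FImp of form P & form P.

Definition interp (P : finType) := {ffun P -> bool}.

Fixpoint eval (P : finType) (w : interp P) (f : form P) : bool :=
  match f with
  | FVar p => w p
  | FTop => true
  | FBot => false
  | FNeg g => ~~ eval w g
  | FAnd g h => eval w g && eval w h
  | FOr g h => eval w g || eval w h
  | FImp g h => eval w g ==> eval w h
  end.

Definition models (P : finType) (f : form P) : {set interp P} := [set w | eval w f].

Definition entails (P : finType) (f g : form P) : Prop :=
  forall w : interp P, eval w f -> eval w g.
Definition fequiv (P : finType) (f g : form P) : Prop := entails f g /\ entails g f.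
Definition consistent (P : finType) (f : form P) : Prop := exists w : interp P, eval w f.

Definition epistemic_space (P : finType) (E : Type) (B : E -> form P) : Prop :=
  inhabited E /\
  (forall e : E, consistent (B e)) /\
  (forall f : form P, consistent f -> exists e : E, fequiv (B e) f).

(* A society = nonempty finite subset of the (well-)ordered set S of agents,
   represented canonically by its strictly increasing enumeration. *)
Record society (d : Order.disp_t) (S : orderType d) := Society {
  soc_seq :> seq S;
  soc_sorted : sorted (fun x y : S => (x < y)%O) soc_seq;
  soc_nonempty : 0 < size soc_seq }.

Definition single (d : Order.disp_t) (S : orderType d) (i : S) : society S :=
  @Society d S [:: i] erefl erefl.

Definition profile (E : Type) (d : Order.disp_t) (S : orderType d) (N : society S) :=
  seq_sub (soc_seq N) -> E.

Definition sprof (E : Type) (d : Order.disp_t) (S : orderType d) (i : S) (Ei : E)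
  : profile E (single i) := fun _ => Ei.
Arguments sprof {E d S} i Ei _.

(* equivalent profiles: same size, entries coincide position-wise
   (positions w.r.t. the increasing enumeration) *)
Definition prof_equiv (E : Type) (d : Order.disp_t) (S : orderType d)
  (N M : society S) (Phi : profile E N) (Psi : profile E M) : Prop :=
  size N = size M /\
  forall (i : seq_sub (soc_seq N)) (j : seq_sub (soc_seq M)),
    index (val i) N = index (val j) M -> Phi i = Psi j.

Definition fusion_op (E : Type) (d : Order.disp_t) (S : orderType d) :=
  forall N : society S, profile E N -> E -> E.

Section FusionProps.
Variables (P : finType) (E : Type) (B : E -> form P) (d : Order.disp_t) (S : orderType d).
Variable nabla : fusion_op E S.

Definition nab1 (i : S) (Ei e : E) : E := nabla (sprof i Ei) e.

Definition ESF1 := forall N (Phi : profile E N) e, entails (B (nabla Phi e)) (B e).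
Definition ESF2 := forall N M (Phi : profile E N) (Psi : profile E M) e e',
  prof_equiv Phi Psi -> fequiv (B e) (B e') ->
  fequiv (B (nabla Phi e)) (B (nabla Psi e')).
Definition ESF3 := forall N (Phi : profile E N) e e' e'',
  fequiv (B e) (FAnd (B e') (B e'')) ->
  entails (FAnd (B (nabla Phi e')) (B e'')) (B (nabla Phi e)).
Definition ESF4 := forall N (Phi : profile E N) e e' e'',
  fequiv (B e) (FAnd (B e') (B e'')) ->
  consistent (FAnd (B (nabla Phi e')) (B e'')) ->
  entails (B (nabla Phi e)) (FAnd (B (nabla Phi e')) (B e'')).

Definition basic_fusion := [/\ ESF1, ESF2, ESF3 & ESF4].

(* (ESF-SD); "B(x) == phi_M" is written as "models (B x) = M" *)
Definition ESF_SD := forall (i : S) (w w' w'' : interp P) (ew ew' : E),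
  w != w' -> w' != w'' -> w != w'' ->
  models (B ew) = [set w; w'] -> models (B ew') = [set w'; w''] ->
  [/\ (exists Ei, models (B (nab1 i Ei ew)) = [set w; w'] /\
                  models (B (nab1 i Ei ew')) = [set w'; w'']),
      (exists Ei, models (B (nab1 i Ei ew)) = [set w; w'] /\
                  models (B (nab1 i Ei ew')) = [set w']),
      (exists Ei, models (B (nab1 i Ei ew)) = [set w] /\
                  models (B (nab1 i Ei ew')) = [set w'; w''])
    & (exists Ei, models (B (nab1 i Ei ew)) = [set w] /\
                  models (B (nab1 i Ei ew')) = [set w'])].

Definition ESF_U := forall N (Phi : profile E N) e,
  (forall i j : seq_sub (soc_seq N), Phi i = Phi j) ->
  forall i : seq_sub (soc_seq N),
    fequiv (B (nabla Phi e)) (B (nab1 (val i) (Phi i) e)).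

Definition ESF_I := forall N (Phi Phi' : profile E N) e,
  (forall e', entails (B e') (B e) ->
     forall j : seq_sub (soc_seq N),
       fequiv (B (nab1 (val j) (Phi j) e')) (B (nab1 (val j) (Phi' j) e'))) ->
  fequiv (B (nabla Phi e)) (B (nabla Phi' e)).

Definition ESF_D := forall N : society S, exists dN : seq_sub (soc_seq N),
  forall (Phi : profile E N) e,
    entails (B (nabla Phi e)) (B (nab1 (val dN) (Phi dN) e)).

End FusionProps.

(* For a fixed profile, ESF1-ESF4 are the AGM revision postulates, so [nabla Phi] picks from the
   models of its input the maximal elements of a total preorder on interpretations, revealed by
   its choices on pairs.  Read this way, [nabla] aggregates the agents' preorders into a social
   one: ESF-I is independence of irrelevant alternatives, ESF-U together with ESF-I gives the
   weak Pareto principle, and ESF-SD makes the individual preorders rich enough on every triple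
   of interpretations (there are at least four interpretations when |P| >= 2).  Sen's decisive-set
   proof of Arrow's theorem then yields a dictator, whose choices contain the social ones. *)

From HB Require Import structures.
From mathcomp Require Import all_boot all_order.
From Stdlib Require Import ClassicalEpsilon.
Set Implicit Arguments. Unset Strict Implicit. Unset Printing Implicit Defensive.

Section WeakOrder.
Variables (A : Type) (r : rel A).
Hypotheses (r_total : total r) (r_trans : transitive r).

Lemma total_refl x : r x x.
Proof. by move: (r_total x x); rewrite orbb. Qed.

Lemma nrelW x y : ~~ r y x -> r x y.
Proof. by move=> hyx; move: (r_total x y); rewrite (negbTE hyx) orbF. Qed.

Lemma rel_nrel_trans x y z : r x y -> ~~ r z y -> ~~ r z x.
Proof. by move=> hxy; apply: contra => hzx; apply: r_trans hxy. Qed.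

Lemma nrel_rel_trans x y z : ~~ r y x -> r y z -> ~~ r z x.
Proof. by move=> hyx hyz; apply: contra hyx; apply: r_trans. Qed.

Lemma nrel_trans x y z : ~~ r y x -> ~~ r z y -> ~~ r z x.
Proof. by move/nrelW; apply: rel_nrel_trans. Qed.

End WeakOrder.

Section PairAgreement.
Variables (A : eqType) (r r' : rel A).
Hypotheses (r_total : total r) (r'_total : total r').

Lemma agree_pair x y : r x y = r' x y -> r y x = r' y x -> {in [:: x; y] &, r =2 r'}.
Proof.
move=> exy eyx u v; rewrite !inE => /orP[]/eqP-> /orP[]/eqP->;
  by rewrite // ?(total_refl r_total) ?(total_refl r'_total).
Qed.

Lemma nrel_agree x y : ~~ r y x -> ~~ r' y x -> {in [:: x; y] &, r =2 r'}.
Proof.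
move=> h h'; apply: agree_pair;
  by rewrite ?(negbTE h) ?(negbTE h') ?(nrelW r_total h) ?(nrelW r'_total h').
Qed.

Lemma in2_pairC (f g : rel A) x y :
  {in [:: x; y] &, f =2 g} -> {in [:: y; x] &, f =2 g}.
Proof. by move=> h u v; rewrite !inE => hu hv; apply: h; rewrite !inE orbC. Qed.

End PairAgreement.

Section Decisiveness.
Variables (A : eqType) (T : finType) (St : Type).
Variables (pref : T -> St -> rel A) (agg : (T -> St) -> rel A).

Definition almost_decisive (V : {set T}) x y := forall Phi : T -> St,
  (forall j, j \in V -> ~~ pref j (Phi j) y x) ->
  (forall j, j \notin V -> ~~ pref j (Phi j) x y) -> ~~ agg Phi y x.

Definition decisive_on (V : {set T}) x y := forall Phi : T -> St,
  (forall j, j \in V -> ~~ pref j (Phi j) y x) -> ~~ agg Phi y x.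

Definition decisive V := forall x y, x != y -> decisive_on V x y.

Lemma decisive_on_almost V x y : decisive_on V x y -> almost_decisive V x y.
Proof. by move=> hD Phi hV _; apply: hD. Qed.

End Decisiveness.

Section Expansion.
Variables (A : eqType) (T : finType) (St : Type).
Variables (pref : T -> St -> rel A) (agg : (T -> St) -> rel A).
Hypothesis pref_total : forall j s, total (pref j s).
Hypothesis pref_trans : forall j s, transitive (pref j s).
Hypothesis agg_total : forall Phi, total (agg Phi).
Hypothesis agg_trans : forall Phi, transitive (agg Phi).
Hypothesis agg_IIA : forall Phi Phi' x y,
  (forall j, {in [:: x; y] &, pref j (Phi j) =2 pref j (Phi' j)}) ->
  {in [:: x; y] &, agg Phi =2 agg Phi'}.
Hypothesis agg_pareto : forall Phi x y, (forall j, ~~ pref j (Phi j) y x) -> ~~ agg Phi y x.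
Hypothesis rich_chain : forall j a b c, a != b -> b != c -> a != c ->
  exists s, ~~ pref j s b a /\ ~~ pref j s c b.
Hypothesis rich_tie_low : forall j a b c, a != b -> b != c -> a != c ->
  exists s, [/\ ~~ pref j s b a, pref j s b c & pref j s c b].

Lemma rich_top j s0 a b c : a != b -> b != c -> a != c ->
  exists s, [/\ ~~ pref j s b a, ~~ pref j s c a & {in [:: b; c] &, pref j s =2 pref j s0}].
Proof.
move=> ab bc ac; have cb : c != b by rewrite eq_sym.
have tot := @pref_total j; have tr := @pref_trans j.
case ebc: (pref j s0 b c); case ecb: (pref j s0 c b).
- have [s [hba hbc hcb]] := rich_tie_low j ab bc ac.
  exists s; split=> //; first exact: (nrel_rel_trans (tr s) hba hbc).
  by apply: (agree_pair (tot s) (tot s0)); rewrite ?hbc ?hcb.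
- have [s [hba hcb]] := rich_chain j ab bc ac.
  exists s; split=> //; first exact: (nrel_trans (tot s) (tr s) hba hcb).
  by apply: (agree_pair (tot s) (tot s0)); rewrite ?ebc ?ecb ?(nrelW (tot s) hcb) ?(negbTE hcb).
- have [s [hca hbc]] := rich_chain j ac cb ab.
  exists s; split=> //; first exact: (nrel_trans (tot s) (tr s) hca hbc).
  by apply: (agree_pair (tot s) (tot s0)); rewrite ?ebc ?ecb ?(nrelW (tot s) hbc) ?(negbTE hbc).
- by move: (tot s0 b c); rewrite ebc ecb.
Qed.

(* The field-expansion step of Sen's proof. *)
Lemma almost_decisive_right V x y z : x != y -> y != z -> x != z ->
  almost_decisive pref agg V x y -> decisive_on pref agg V x z.
Proof.
move=> xy yz xz hA Phi hV; have yx : y != x by rewrite eq_sym.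
have [chain hchain] := choice _ (fun j => rich_chain j xy yz xz).
have [top htop] := choice _ (fun j => rich_top j (Phi j) yx xz yz).
pose Psi j := if j \in V then chain j else top j.
have soc_xy : ~~ agg Psi y x.
  by apply: hA => j jV; rewrite /Psi ?jV ?(negbTE jV); [case: (hchain j)|case: (htop j)].
have soc_yz : ~~ agg Psi z y.
  by apply: agg_pareto => j; rewrite /Psi; case: ifP => _; [case: (hchain j)|case: (htop j)].
have agree j : {in [:: x; z] &, pref j (Phi j) =2 pref j (Psi j)}.
  rewrite /Psi; case: ifP => jV; last by case: (htop j) => _ _ agree u v hu hv; rewrite agree.
  case: (hchain j) => hyx hzy.
  exact: (nrel_agree (@pref_total _ _) (@pref_total _ _) (hV j jV)
           (nrel_trans (@pref_total _ _) (@pref_trans _ _) hyx hzy)).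
rewrite (agg_IIA agree) ?inE ?eqxx ?orbT //.
exact: (nrel_trans (@agg_total _) (@agg_trans _) soc_xy soc_yz).
Qed.

End Expansion.

Section Arrow.
Variables (A : eqType) (T : finType) (St : Type).
Variables (pref : T -> St -> rel A) (agg : (T -> St) -> rel A).
Hypothesis pref_total : forall j s, total (pref j s).
Hypothesis pref_trans : forall j s, transitive (pref j s).
Hypothesis agg_total : forall Phi, total (agg Phi).
Hypothesis agg_trans : forall Phi, transitive (agg Phi).
Hypothesis agg_IIA : forall Phi Phi' x y,
  (forall j, {in [:: x; y] &, pref j (Phi j) =2 pref j (Phi' j)}) ->
  {in [:: x; y] &, agg Phi =2 agg Phi'}.
Hypothesis agg_pareto : forall Phi x y, (forall j, ~~ pref j (Phi j) y x) -> ~~ agg Phi y x.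
Hypothesis rich_chain : forall j a b c, a != b -> b != c -> a != c ->
  exists s, ~~ pref j s b a /\ ~~ pref j s c b.
Hypothesis rich_tie_low : forall j a b c, a != b -> b != c -> a != c ->
  exists s, [/\ ~~ pref j s b a, pref j s b c & pref j s c b].
Hypothesis rich_tie_high : forall j a b c, a != b -> b != c -> a != c ->
  exists s, [/\ pref j s a b, pref j s b a & ~~ pref j s c b].
Hypothesis three_alts : exists x y z : A, [/\ x != y, y != z & x != z].

Local Notation almost_decisive := (almost_decisive pref agg).
Local Notation decisive_on := (decisive_on pref agg).
Local Notation decisive := (decisive pref agg).

Let expand_right := almost_decisive_right pref_total pref_trans agg_total agg_trans
  agg_IIA agg_pareto rich_chain rich_tie_low.

(* Mirror image of [expand_right]: reverse every preference. *)
Let expand_left V x y z : x != y -> y != z -> x != z ->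
  almost_decisive V x y -> decisive_on V z y.
Proof.
move=> xy yz xz hA; have yx : y != x by rewrite eq_sym.
apply: (@almost_decisive_right A T St (fun j s u v => pref j s v u)
          (fun Phi u v => agg Phi v u) _ _ _ _ _ _ _ _ V y x z yx xz yz hA).
- by move=> j s u v; rewrite /= orbC pref_total.
- by move=> j s u v w huv hvw; apply: pref_trans hvw huv.
- by move=> Phi u v; rewrite /= orbC agg_total.
- by move=> Phi u v w huv hvw; apply: agg_trans hvw huv.
- move=> Phi Phi' u v hPhi a b ha hb; apply: (agg_IIA (x := u) (y := v)) => //.
  by move=> j a' b' ha' hb'; apply: hPhi.
- by move=> Phi u v; apply: agg_pareto.
- move=> j a b c ab bc ac; have [|||s [hba hcb]] := rich_chain j (c := a) (b := b) (a := c);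
    by rewrite 1?eq_sym //; exists s.
- move=> j a b c ab bc ac; have [|||s [hcb hbc hab]] := rich_tie_high j (c := a) (b := b) (a := c);
    by rewrite 1?eq_sym //; exists s.
Qed.

Lemma third_alt (x y : A) : exists z, (z != x) && (z != y).
Proof.
have [a [b [c [ab bc ac]]]] := three_alts.
have abc_uniq : uniq [:: a; b; c] by rewrite /= !inE negb_or ab ac bc.
have /allPn [z _ hz] : ~~ all (mem [:: x; y]) [:: a; b; c].
  by apply/negP => /allP abc_sub; have := uniq_leq_size abc_uniq abc_sub.
by exists z; move: hz; rewrite !inE negb_or.
Qed.

Lemma almost_decisive_decisive V x y : x != y -> almost_decisive V x y -> decisive V.
Proof.
move=> xy hA.
have from_x w : w != x -> decisive_on V x w.
  have [-> _|wy wx] := eqVneq w y; last by apply: expand_right hA; rewrite // eq_sym.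
  have [z /andP [zx zy]] := third_alt x y.
  have /decisive_on_almost hxz : decisive_on V x z by apply: expand_right hA; rewrite // eq_sym.
  by apply: expand_right hxz; rewrite // eq_sym.
move=> u v; have [-> xv|ux uv] := eqVneq u x; first by apply: from_x; rewrite eq_sym.
have [-> |vx] := eqVneq v x.
  have [w /andP [wx wu]] := third_alt x u.
  have /decisive_on_almost hxw := from_x w wx.
  have /decisive_on_almost huw : decisive_on V u w by apply: expand_left hxw; rewrite // eq_sym.
  by apply: expand_right huw; rewrite // eq_sym.
have /decisive_on_almost hxv := from_x v vx.
by apply: expand_left hxv; rewrite // eq_sym.
Qed.

Lemma almost_decisive_witness (V : {set T}) (Psi : T -> St) x y :
  (forall j, j \in V -> ~~ pref j (Psi j) y x) ->
  (forall j, j \notin V -> ~~ pref j (Psi j) x y) ->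
  ~~ agg Psi y x -> almost_decisive V x y.
Proof.
move=> hV hO hsoc Phi hV' hO'.
suff agree j : {in [:: x; y] &, pref j (Phi j) =2 pref j (Psi j)}.
  by rewrite (agg_IIA agree) ?inE ?eqxx ?orbT.
have [jV|jV] := boolP (j \in V).
  exact: (nrel_agree (@pref_total _ _) (@pref_total _ _) (hV' j jV) (hV j jV)).
exact/in2_pairC/(nrel_agree (@pref_total _ _) (@pref_total _ _) (hO' j jV) (hO j jV)).
Qed.

(* With [d] ranking x > y > z, the rest of [V] z > x > y and the others y > z > x, society puts
   x above y; the social ranking of z against x then exhibits [[set d]] or [V :\ d] as almost
   decisive. *)
Lemma decisive_contract (V : {set T}) d :
  d \in V -> decisive V -> decisive [set d] \/ decisive (V :\ d).
Proof.
move=> dV hD; have [x [y [z [xy yz xz]]]] := three_alts.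
have [yx zy zx] : [/\ y != x, z != y & z != x] by rewrite ![y == _]eq_sym ![z == _]eq_sym.
have [xyz hxyz] := choice _ (fun j => rich_chain j xy yz xz).
have [zxy hzxy] := choice _ (fun j => rich_chain j zx xy zy).
have [yzx hyzx] := choice _ (fun j => rich_chain j yz zx yx).
pose Psi j := if j == d then xyz j else if j \in V then zxy j else yzx j.
have soc_xy : ~~ agg Psi y x.
  apply: (hD x y xy Psi) => j jV; rewrite /Psi; case: ifP => _; first by case: (hxyz j).
  by rewrite jV; case: (hzxy j).
have [soc_zx|soc_xz] := boolP (agg Psi z x).
- right; apply: (almost_decisive_decisive zy); apply: (almost_decisive_witness (Psi := Psi)).
  + move=> j; rewrite in_setD1 => /andP [jd jV]; rewrite /Psi (negbTE jd) jV.
    by case: (hzxy j) => hxz hyx; apply: (nrel_trans (@pref_total _ _) (@pref_trans _ _) hxz hyx).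
  + move=> j; rewrite /Psi in_setD1 negb_and negbK; case: eqP => [_ _|_ /= /negbTE ->].
      by case: (hxyz j).
    by case: (hyzx j).
  + exact: (rel_nrel_trans (@agg_trans _) soc_zx soc_xy).
- left; apply: (almost_decisive_decisive xz); apply: (almost_decisive_witness (Psi := Psi)) => //.
  + move=> j /set1P ->; rewrite /Psi eqxx /=.
    by case: (hxyz d) => hyx hzy; apply: (nrel_trans (@pref_total _ _) (@pref_trans _ _) hyx hzy).
  + move=> j /set1P/eqP/negbTE jd; rewrite /Psi jd; case: ifP => _; first by case: (hzxy j).
    by case: (hyzx j).
Qed.

Lemma not_decisive_set0 : ~ decisive set0.
Proof.
move=> hD; have [x [y [z [xy yz xz]]]] := three_alts; have yx : y != x by rewrite eq_sym.
have [Phi _] := choice _ (fun j => rich_chain j xy yz xz).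
have vacuous (Q : T -> Prop) j : j \in (set0 : {set T}) -> Q j by rewrite inE.
move: (hD x y xy Phi (vacuous _)) (hD y x yx Phi (vacuous _)).
by case/orP: (@agg_total Phi x y) => ->.
Qed.

Theorem arrow : exists d, forall Phi x y, ~~ pref d (Phi d) y x -> ~~ agg Phi y x.
Proof.
suff [d hd] : exists d, decisive [set d].
  exists d => Phi x y hyx; have [exy|nxy] := eqVneq x y.
    by move: hyx; rewrite exy (total_refl (@pref_total d _)).
  by apply: (hd x y nxy) => j /set1P ->.
have decT : decisive [set: T].
  by move=> x y _ Phi hV; apply: agg_pareto => j; apply: hV; rewrite inE.
suff : forall n (V : {set T}), #|V| <= n -> decisive V -> exists d, decisive [set d].
  by apply; [exact: leqnn | exact: decT].
elim=> [|n IH] V hV hD; have [V0|[d dV]] := set_0Vmem V.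
- by rewrite V0 in hD; case: not_decisive_set0.
- by move: hV; rewrite (cardsD1 d) dV.
- by rewrite V0 in hD; case: not_decisive_set0.
case: (decisive_contract dV hD) => [hd|hVd]; first by exists d.
by apply: (IH (V :\ d)) hVd; move: hV; rewrite (cardsD1 d) dV.
Qed.

End Arrow.

Section SetFormula.
Variable P : finType.

Definition literal (w : interp P) p : form P := if w p then FVar p else FNeg (FVar p).

Definition char_form (w : interp P) : form P :=
  foldr (@FAnd P) (FTop P) [seq literal w p | p <- enum P].

Definition set_form (M : {set interp P}) : form P :=
  foldr (@FOr P) (FBot P) [seq char_form w | w <- enum M].

Lemma eval_literal v w p : eval v (literal w p) = (v p == w p).
Proof. by rewrite /literal; case: (w p) => /=; case: (v p). Qed.

Lemma eval_char_form v w : eval v (char_form w) = (v == w).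
Proof.
have -> : eval v (char_form w) = all (eval v) [seq literal w p | p <- enum P].
  by rewrite /char_form; elim: [seq _ | _ <- _] => //= f fs ->.
rewrite all_map; apply/allP/eqP => [hvw|-> p _]; last by rewrite /= eval_literal.
by apply/ffunP => p; apply/eqP; rewrite -eval_literal; apply: hvw; rewrite mem_enum.
Qed.

Lemma eval_set_form v M : eval v (set_form M) = (v \in M).
Proof.
have -> : eval v (set_form M) = has (eval v) [seq char_form w | w <- enum M].
  by rewrite /set_form; elim: [seq _ | _ <- _] => //= f fs ->.
rewrite has_map; apply/hasP/idP => [[w]|vM].
  by rewrite mem_enum /= eval_char_form => wM /eqP ->.
by exists v; rewrite ?mem_enum //= eval_char_form.
Qed.

Lemma fequiv_models (f g : form P) : fequiv f g <-> models f = models g.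
Proof.
split => [[hfg hgf]|hfg].
  by apply/setP => w; rewrite !inE; apply/idP/idP; [apply: hfg|apply: hgf].
by split => w; move/setP/(_ w): hfg; rewrite !inE => ->.
Qed.

End SetFormula.

Section BasicOperator.
Variables (P : finType) (E : Type) (B : E -> form P).
Hypothesis B_space : epistemic_space B.
Local Notation W := (interp P).

Lemma models_neq0 e : models (B e) != set0.
Proof.
case: B_space => _ [B_consistent _]; case: (B_consistent e) => w hw.
by apply/set0Pn; exists w; rewrite inE.
Qed.

Lemma models_onto (M : {set W}) : M != set0 -> exists e, models (B e) = M.
Proof.
case/set0Pn => w wM; case: B_space => _ [_ B_onto].
have [|e /fequiv_models he] := B_onto (set_form M); first by exists w; rewrite eval_set_form.
by exists e; rewrite he; apply/setP => v; rewrite inE eval_set_form.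
Qed.

(* Junk when [M = set0]. *)
Definition belief_of (M : {set W}) : E := epsilon (proj1 B_space) (fun e => models (B e) = M).

Lemma belief_ofK M : M != set0 -> models (B (belief_of M)) = M.
Proof. by move/models_onto; apply: epsilon_spec. Qed.

Lemma eval_belief_of M w : M != set0 -> eval w (B (belief_of M)) = (w \in M).
Proof. by move=> MN; rewrite -[in RHS](belief_ofK MN) inE. Qed.

Definition basic_op (f : E -> E) :=
  [/\ forall e, entails (B (f e)) (B e),
      forall e e', fequiv (B e) (B e') -> fequiv (B (f e)) (B (f e')),
      forall e e' e'', fequiv (B e) (FAnd (B e') (B e'')) ->
        entails (FAnd (B (f e')) (B e'')) (B (f e))
    & forall e e' e'', fequiv (B e) (FAnd (B e') (B e'')) ->
        consistent (FAnd (B (f e')) (B e'')) ->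
        entails (B (f e)) (FAnd (B (f e')) (B e''))].

Section RevealedPreference.
Variable f : E -> E.
Hypothesis f_basic : basic_op f.

Definition chosen (M : {set W}) := models (B (f (belief_of M))).

Definition revealed x y := x \in chosen [set x; y].

Lemma chosen_models e : models (B (f e)) = chosen (models (B e)).
Proof.
case: f_basic => _ f_ext _ _; apply/fequiv_models/f_ext/fequiv_models.
by rewrite belief_ofK ?models_neq0.
Qed.

Lemma chosen_sub M : M != set0 -> chosen M \subset M.
Proof.
case: f_basic => f_sub _ _ _ MN; apply/subsetP => w; rewrite inE => /f_sub.
by rewrite eval_belief_of.
Qed.

Lemma chosen_neq0 M : chosen M != set0.
Proof. exact: models_neq0. Qed.

(* ESF3 and ESF4 make [chosen] satisfy Arrow's choice axiom. *)
Lemma chosen_restrict (M M' : {set W}) : M' \subset M -> chosen M :&: M' != set0 ->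
  chosen M' = chosen M :&: M'.
Proof.
case: f_basic => _ _ f_sup f_inf sub /set0Pn [v]; rewrite inE => /andP [vC vM'].
have M'N : M' != set0 by apply/set0Pn; exists v.
have MN : M != set0 by apply/set0Pn; exists v; apply: (subsetP sub).
have M'_meet : fequiv (B (belief_of M')) (FAnd (B (belief_of M)) (B (belief_of M'))).
  apply/fequiv_models/setP => w; rewrite !inE /= !eval_belief_of //.
  by case wM': (w \in M'); rewrite ?andbF // (subsetP sub).
have meet_consistent : consistent (FAnd (B (f (belief_of M))) (B (belief_of M'))).
  by exists v; rewrite /= eval_belief_of // vM' andbT; move: vC; rewrite inE.
apply/setP => w; rewrite /chosen !inE; apply/idP/andP => [/(f_inf _ _ _ M'_meet meet_consistent)|].
  by rewrite /= eval_belief_of // => /andP.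
by case=> wC wM'; apply: (f_sup _ _ _ M'_meet); rewrite /= wC eval_belief_of.
Qed.

Lemma pair_neq0 (x y : W) : [set x; y] != set0.
Proof. by apply/set0Pn; exists x; rewrite !inE eqxx. Qed.

Lemma revealed_total : total revealed.
Proof.
move=> x y; case/set0Pn: (chosen_neq0 [set x; y]) => u uC.
have := subsetP (chosen_sub (pair_neq0 x y)) u uC; rewrite !inE.
by case/orP => /eqP eu; rewrite eu in uC; rewrite /revealed ?uC // [[set y; x]]setUC uC orbT.
Qed.

Lemma revealed_chosen (M : {set W}) x y : x \in chosen M -> y \in M -> revealed x y.
Proof.
move=> xC yM; have MN : M != set0 by apply/set0Pn; exists y.
have xM := subsetP (chosen_sub MN) x xC.
have sub : [set x; y] \subset M by apply/subsetP => v; rewrite !inE => /orP [] /eqP ->.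
have meet : chosen M :&: [set x; y] != set0.
  by apply/set0Pn; exists x; rewrite in_setI xC !inE eqxx.
by rewrite /revealed (chosen_restrict sub meet) in_setI xC !inE eqxx.
Qed.

Lemma chosen_revealed (M : {set W}) x y :
  x \in M -> y \in chosen M -> revealed x y -> x \in chosen M.
Proof.
move=> xM yC; have MN : M != set0 by apply/set0Pn; exists x.
have yM := subsetP (chosen_sub MN) y yC.
have sub : [set x; y] \subset M by apply/subsetP => v; rewrite !inE => /orP [] /eqP ->.
have meet : chosen M :&: [set x; y] != set0.
  by apply/set0Pn; exists y; rewrite in_setI yC !inE eqxx orbT.
by rewrite /revealed (chosen_restrict sub meet) in_setI => /andP [].
Qed.

Lemma revealed_trans : transitive revealed.
Proof.
move=> y x z xy yz; pose M := [set x; y; z].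
have [xM yM zM] : [/\ x \in M, y \in M & z \in M] by rewrite !inE !eqxx ?orbT.
suff xC : x \in chosen M by apply: revealed_chosen xC zM.
have MN : M != set0 by apply/set0Pn; exists x.
case/set0Pn: (chosen_neq0 M) => u uC; have uM := subsetP (chosen_sub MN) u uC.
rewrite !inE -orbA in uM; case/or3P: uM => /eqP eu; rewrite eu in uC => //.
  exact: (chosen_revealed xM uC xy).
exact: (chosen_revealed xM (chosen_revealed yM uC yz) xy).
Qed.

Lemma chosenE (M : {set W}) :
  M != set0 -> chosen M = [set x in M | [forall (y | y \in M), revealed x y]].
Proof.
move=> MN; apply/setP => x; rewrite inE; apply/idP/andP => [xC|[xM /forall_inP x_max]].
  split; first exact: (subsetP (chosen_sub MN)).
  by apply/forall_inP => y; apply: revealed_chosen.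
case/set0Pn: (chosen_neq0 M) => y yC.
exact: (chosen_revealed xM yC (x_max y (subsetP (chosen_sub MN) y yC))).
Qed.

End RevealedPreference.

Lemma chosen_eq f g (M : {set W}) : basic_op f -> basic_op g -> M != set0 ->
  {in M &, revealed f =2 revealed g} -> chosen f M = chosen g M.
Proof.
move=> f_basic g_basic MN fg; rewrite !chosenE //; apply: eq_finset => u.
by apply: andb_id2l => uM; apply: eq_forallb_in => v vM; rewrite fg.
Qed.

Lemma revealed_eq_pair f g x y : basic_op f -> basic_op g ->
  chosen f [set x; y] = chosen g [set x; y] -> {in [:: x; y] &, revealed f =2 revealed g}.
Proof.
move=> f_basic g_basic fg u v; rewrite !inE => /orP [] /eqP -> /orP [] /eqP ->;
  by rewrite ?(total_refl (revealed_total f_basic)) ?(total_refl (revealed_total g_basic))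
       /revealed ?fg // setUC fg.
Qed.

End BasicOperator.

Section FusionAsAggregation.
Variables (P : finType) (E : Type) (B : E -> form P) (d : Order.disp_t) (S : orderType d).
Variable nabla : fusion_op E S.
Hypothesis B_space : epistemic_space B.
Hypothesis nabla_basic : basic_fusion B nabla.
Hypothesis nabla_SD : ESF_SD B nabla.
Hypothesis nabla_U : ESF_U B nabla.
Hypothesis nabla_I : ESF_I B nabla.
Hypothesis P_gt1 : 1 < #|P|.
Local Notation W := (interp P).
Local Notation chosen := (chosen B_space).
Local Notation revealed := (revealed B_space).

Lemma prof_equiv_refl (N : society S) (Phi : profile E N) : prof_equiv Phi Phi.
Proof. by split=> // i j /(index_inj (val i) (valP i) (valP j))/val_inj ->. Qed.

Lemma basic_op_nabla (N : society S) (Phi : profile E N) : basic_op B (nabla Phi).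
Proof.
case: nabla_basic => ESF1 ESF2 ESF3 ESF4; split; [exact: ESF1 | | exact: ESF3 | exact: ESF4].
by move=> e e'; apply: ESF2 (prof_equiv_refl Phi).
Qed.

Lemma nab1_agent_irrelevant i i' s e :
  models (B (nab1 nabla i s e)) = models (B (nab1 nabla i' s e)).
Proof. by case: nabla_basic => _ ESF2 _ _; apply/fequiv_models/ESF2; split. Qed.

Lemma three_interps : exists x y z : W, [/\ x != y, y != z & x != z].
Proof.
have [p [q [_ _ pq]]] := card_gt1P P_gt1.
exists [ffun _ => false], [ffun _ => true], [ffun r => r == p]; split.
- by apply/eqP => /ffunP/(_ p); rewrite !ffunE.
- by apply/eqP => /ffunP/(_ q); rewrite !ffunE eq_sym (negbTE pq).
- by apply/eqP => /ffunP/(_ p); rewrite !ffunE eqxx.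
Qed.

Variable N : society S.
Local Notation T := (seq_sub (soc_seq N)).

Definition indiv_pref (j : T) (s : E) := revealed (nab1 nabla (val j) s).
Definition social_pref (Phi : profile E N) := revealed (nabla Phi).

Lemma indiv_pref_agent (j j' : T) s : indiv_pref j s =2 indiv_pref j' s.
Proof.
by move=> x y; rewrite /indiv_pref /revealed /chosen (nab1_agent_irrelevant (val j) (val j')).
Qed.

Lemma social_pref_IIA (Phi Phi' : profile E N) x y :
  (forall j, {in [:: x; y] &, indiv_pref j (Phi j) =2 indiv_pref j (Phi' j)}) ->
  {in [:: x; y] &, social_pref Phi =2 social_pref Phi'}.
Proof.
move=> agree; apply: revealed_eq_pair; try exact: basic_op_nabla.
apply/fequiv_models; apply: nabla_I => e' e'_sub j; apply/fequiv_models.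
rewrite !chosen_models; try exact: basic_op_nabla.
apply: chosen_eq; try exact: basic_op_nabla; first exact: models_neq0.
move=> u v; rewrite !inE => /e'_sub hu /e'_sub hv; apply: agree;
  by move: hu hv; rewrite !eval_belief_of ?pair_neq0 // !inE.
Qed.

Lemma social_pref_pareto (Phi : profile E N) x y :
  (forall j, ~~ indiv_pref j (Phi j) y x) -> ~~ social_pref Phi y x.
Proof.
move=> strict; have [a aN] : exists a, a \in soc_seq N.
  by case: (soc_seq N) (soc_nonempty N) => [|a l] //= _; exists a; rewrite mem_head.
pose j0 : T := SeqSub aN; pose Phi0 : profile E N := fun=> Phi j0.
have unanimous : social_pref Phi0 =2 indiv_pref j0 (Phi j0).
  move=> u v; rewrite /social_pref /indiv_pref /revealed /chosen.
  by have /fequiv_models -> := @nabla_U N Phi0 (belief_of B_space [set u; v]) (fun _ _ => erefl) j0.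
have indiv_total j s : total (indiv_pref j s) by apply: revealed_total (basic_op_nabla _).
have agree j : {in [:: x; y] &, indiv_pref j (Phi j) =2 indiv_pref j (Phi0 j)}.
  have strict0 : ~~ indiv_pref j (Phi0 j) y x by rewrite (indiv_pref_agent j j0).
  exact: (nrel_agree (indiv_total _ _) (indiv_total _ _) (strict j) strict0).
by rewrite (social_pref_IIA agree) ?inE ?eqxx ?orbT // unanimous.
Qed.

(* Cases (iv), (iii) and (ii) of ESF-SD. *)
Lemma indiv_pref_rich (j : T) a b c : a != b -> b != c -> a != c ->
  [/\ exists s, ~~ indiv_pref j s b a /\ ~~ indiv_pref j s c b,
      exists s, [/\ ~~ indiv_pref j s b a, indiv_pref j s b c & indiv_pref j s c b]
    & exists s, [/\ indiv_pref j s a b, indiv_pref j s b a & ~~ indiv_pref j s c b]].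
Proof.
move=> ab bc ac.
have [_ [s_hi [hi_ab hi_bc]] [s_lo [lo_ab lo_bc]] [s_ch [ch_ab ch_bc]]] :=
  nabla_SD (val j) ab bc ac (belief_ofK B_space (pair_neq0 a b))
    (belief_ofK B_space (pair_neq0 b c)).
have [ba cb] : b != a /\ c != b by rewrite !(eq_sym b) !(eq_sym c).
rewrite /indiv_pref /revealed /chosen [[set b; a]]setUC [[set c; b]]setUC; split.
- by exists s_ch; rewrite ch_ab ch_bc !inE (negbTE ba) (negbTE cb).
- by exists s_lo; rewrite lo_ab lo_bc !inE (negbTE ba) !eqxx ?orbT.
- by exists s_hi; rewrite hi_ab hi_bc !inE (negbTE cb) !eqxx ?orbT.
Qed.

Lemma social_dictator : exists dN : T,
  forall Phi x y, ~~ indiv_pref dN (Phi dN) y x -> ~~ social_pref Phi y x.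
Proof.
apply: arrow.
- by move=> j s; exact: (revealed_total B_space (basic_op_nabla _)).
- by move=> j s; rewrite /indiv_pref; apply: revealed_trans (basic_op_nabla _).
- by move=> Phi; exact: (revealed_total B_space (basic_op_nabla _)).
- by move=> Phi; rewrite /social_pref; apply: revealed_trans (basic_op_nabla _).
- exact: social_pref_IIA.
- exact: social_pref_pareto.
- by move=> j a b c ab bc ac; case: (indiv_pref_rich j ab bc ac).
- by move=> j a b c ab bc ac; case: (indiv_pref_rich j ab bc ac).
- by move=> j a b c ab bc ac; case: (indiv_pref_rich j ab bc ac).
- exact: three_interps.
Qed.

Lemma dictator_entails (dN : T) :
  (forall Phi x y, ~~ indiv_pref dN (Phi dN) y x -> ~~ social_pref Phi y x) ->
  forall (Phi : profile E N) e, entails (B (nabla Phi e)) (B (nab1 nabla (val dN) (Phi dN) e)).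
Proof.
move=> dict Phi e.
suff sub : models (B (nabla Phi e)) \subset models (B (nab1 nabla (val dN) (Phi dN) e)).
  by move=> w hw; have := subsetP sub w; rewrite !inE; apply.
rewrite (chosen_models _ (basic_op_nabla Phi)) (chosen_models _ (basic_op_nabla _)).
rewrite !(chosenE _ (basic_op_nabla _)) ?models_neq0 //.
apply/subsetP => w; rewrite !inE => /andP [wM /forall_inP w_max]; rewrite wM.
apply/forall_inP => v vM; apply/contraT => /(dict Phi)/negP not_wv.
by case: not_wv; apply: w_max.
Qed.

End FusionAsAggregation.

Theorem corollary2 (P : finType) (E : Type) (B : E -> form P)
  (d : Order.disp_t) (S : orderType d) (nabla : fusion_op E S) :
  well_founded (fun x y : S => (x < y)%O) ->
  epistemic_space B ->
  1 < #|P| ->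
  basic_fusion B nabla ->
  ESF_SD B nabla -> ESF_U B nabla -> ESF_I B nabla ->
  ESF_D B nabla.
Proof.
(* Societies are finite. *)
move=> _ B_space P_gt1 nabla_basic nabla_SD nabla_U nabla_I N.
have [dN dict] := social_dictator B_space nabla_basic nabla_SD nabla_U nabla_I P_gt1 N.
by exists dN; apply: dictator_entails.
Qed.
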